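(* There is an absolute constant $c>0$ such that for all integers $N,M$ for which $C_{N,M}$ is defined, there is a 2D SLP of size at most $c\cdot(\log N+\log M)$ deriving $C_{N,M}$.
   Context: Alphabet $\Sigma\supseteq\{0,1,\$\}$; logarithms are base 2. For $N=2^n$, $\mathsf{Bin}_N$ is the $N\times(n+2)$ array whose $i$-th row is $\$\,b_{i-1}\,\$$ with $b_{i-1}$ the $n$-bit binary representation of $i-1$; $\mathsf{ShiftBin}_N$ is the $2N\times N(n+2)$ array in which, for each $j\in[1..N]$, rows $j..j+N-1$ and columns $(j-1)(n+2)+1..j(n+2)$ form a copy of $\mathsf{Bin}_N$, all other entries being $0$. For integers $N\ge1$, $M\ge4$, let $M'=2^{n}$ be the largest power of two with $M'(\log M'+2)\le M/2$, assume $N\ge M'$, and let $B=\mathsf{ShiftBin}_{M'}$ (of size $2M'\times M'(\log M'+2)$). The 2D string $C_{N,M}$ of size $N\times M$ is the horizontal concatenation of three parts: (1) the left block, of width $M'(\log M'+2)$: $\lfloor N/(2M')\rfloor$ copies of $B$ stacked vertically, followed below by rows of $0$'s to reach height $N$; (2) the right block, of the same width: $M'$ rows of $0$'s, then $\lfloor (N-M')/(2M')\rfloor$ copies of $B$ stacked vertically, then rows of $0$'s to reach height $N$; (3) an all-$0$ block completing the width to $M$. A 2D SLP is a triple $(\mathcal V,\mathcal S,\rho)$ of nonterminals with dimensions, a start, and productions each being a character, a horizontal concatenation of two nonterminals of equal height, or a vertical concatenation of two nonterminals of equal width, with acyclic occurrence relation; it derives the recursive expansion of $\mathcal S$. Its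 size is the total number of symbols on all right-hand sides. *)

From Stdlib Require Import Reals.
From mathcomp Require Import all_boot.

Set Implicit Arguments.
Unset Strict Implicit.
Unset Printing Implicit Defensive.

(* A 2D string over S is represented as the list of its rows (top to bottom),
   each row a list of symbols (left to right). *)
Definition str2 (S : Type) := seq (seq S).

Definition width2 (S : Type) (A : str2 S) : nat := size (head [::] A).

Definition hcat2 (S : Type) (A B : str2 S) : str2 S :=
  [seq x.1 ++ x.2 | x <- zip A B].

Definition vcat2 (S : Type) (A B : str2 S) : str2 S := A ++ B.

(* Nonterminals are the natural numbers 0 .. size P - 1; production of
   nonterminal i is the i-th entry of P. Right-hand sides: *)
Inductive rhs (S : Type) :=
| RChar of S
| RHor of nat & nat
| RVer of nat & nat.

Definition rhs_size (S : Type) (r : rhs S) : nat :=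
  match r with RChar _ => 1 | RHor _ _ => 2 | RVer _ _ => 2 end.

Definition slp_size (S : Type) (P : seq (rhs S)) : nat :=
  \sum_(r <- P) rhs_size r.

(* Acyclicity of the occurrence relation is enforced by requiring every
   nonterminal to occur only on the right-hand sides of larger-numbered
   nonterminals (a topological numbering, which every acyclic SLP admits);
   dimension compatibility of concatenations is required explicitly. *)
Inductive derives (S : Type) (P : seq (rhs S)) : nat -> str2 S -> Prop :=
| der_char i a :
    onth P i = Some (RChar a) -> derives P i [:: [:: a]]
| der_hor i x y A B :
    onth P i = Some (RHor S x y) -> x < i -> y < i ->
    derives P x A -> derives P y B -> size A = size B ->
    derives P i (hcat2 A B)
| der_ver i x y A B :
    onth P i = Some (RVer S x y) -> x < i -> y < i ->
    derives P x A -> derives P y B -> width2 A = width2 B ->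
    derives P i (vcat2 A B).

Definition slp_derives (S : Type) (P : seq (rhs S)) (s : nat) (X : str2 S) : Prop :=
  derives P s X.

(* n = log M', where M' = 2^n is the largest power of two with
   M'(log M' + 2) <= M/2, i.e. 2 * 2^n * (n+2) <= M. (Such n < M.) *)
Definition logMp (M : nat) : nat := \max_(k < M | 2 * 2 ^ k * (k + 2) <= M) k.
Definition Mp (M : nat) : nat := 2 ^ logMp M.

Section CDef.
Variables (S : Type) (zero one dollar : S).

(* Entry (i,k) (0-indexed) of Bin_{2^n}: row i is "$ b_i $", b_i the n-bit
   binary representation of i, most significant bit first. *)
Definition bin_entry (n i k : nat) : S :=
  if (k == 0) || (k == n.+1) then dollar
  else if odd (i %/ 2 ^ (n - k)) then one else zero.

(* Entry (r,c) (0-indexed) of ShiftBin_{2^n} (size 2*2^n x 2^n*(n+2)):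
   the j-th copy (j = c / (n+2), 0-indexed) occupies rows j .. j+2^n-1. *)
Definition shiftbin_entry (n r c : nat) : S :=
  let j := c %/ (n + 2) in
  let k := c %% (n + 2) in
  if (j <= r) && (r < j + 2 ^ n) then bin_entry n (r - j) k else zero.

Definition C_entry (N M r c : nat) : S :=
  let n := logMp M in
  let m := 2 ^ n in
  let W := m * (n + 2) in
  if c < W then
    if r < (N %/ (2 * m)) * (2 * m) then shiftbin_entry n (r %% (2 * m)) c
    else zero
  else if c < 2 * W then
    if (m <= r) && (r - m < ((N - m) %/ (2 * m)) * (2 * m))
    then shiftbin_entry n ((r - m) %% (2 * m)) (c - W)
    else zero
  else zero.

Definition C_str (N M : nat) : str2 S :=
  mkseq (fun r => mkseq (fun c => C_entry N M r c) M) N.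

End CDef.

Definition C_defined (N M : nat) : Prop := 1 <= N /\ 4 <= M /\ Mp M <= N.

Definition log2R (x : R) : R := Rdiv (ln x) (ln (IZR 2%Z)).

(* Binary doubling derives k copies of an already derived block with O(log k)
   new productions, so constant blocks and periodic repetitions are cheap.
   Bin_(2^(k+1)) is a column of 0s beside Bin_(2^k) stacked over a column of 1s
   beside Bin_(2^k); doubling the constant columns alongside, Bin_(2^n) costs
   O(n). Likewise, if A holds t staggered copies of Bin_(2^n) and Z is a zero
   block of t rows, then [A over Z | Z over A] holds 2t copies, so ShiftBin also
   costs O(n). C_(N,M) is two periodic columns of ShiftBin copies padded with
   zero blocks, and n = log M' <= log M, whence O(log N + log M) productions of
   at most two symbols each. *)

From Pilot Require Import Defs.
From Stdlib Require Import Reals Lra.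
From mathcomp Require Import all_boot zify.

Set Implicit Arguments.
Unset Strict Implicit.
Unset Printing Implicit Defensive.

Lemma mkseqD (T : Type) (F : nat -> T) a b :
  mkseq F (a + b) = mkseq F a ++ mkseq (fun i => F (a + i)) b.
Proof. by rewrite /mkseq iotaD map_cat add0n -[in iota a b](addn0 a) iotaDl -map_comp. Qed.

Lemma onth_last (T : Type) (s : seq T) x : onth (s ++ [:: x]) (size s) = Some x.
Proof. by rewrite onth_cat ltnn subnn. Qed.

Lemma modnBMl m q d : q * d <= m -> (m - q * d) %% d = m %% d.
Proof. by move=> le_qd_m; rewrite -[in RHS](subnK le_qd_m) addnC modnMDl. Qed.

Lemma odd_div_exp2_mod i e k : e < k -> odd ((i %% 2 ^ k) %/ 2 ^ e) = odd (i %/ 2 ^ e).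
Proof.
move=> lt_ek; rewrite [in RHS](divn_eq i (2 ^ k)) -(subnK (ltnW lt_ek)) expnD mulnA.
by rewrite addnC divnDMl ?expn_gt0 // oddD oddM oddX subn_eq0 leqNgt lt_ek andbF addbF.
Qed.

Section Rectangles.
Variable S : Type.

Definition mkstr2 (h w : nat) (f : nat -> nat -> S) : str2 S :=
  mkseq (fun r => mkseq (f r) w) h.

Lemma size_mkstr2 h w f : size (mkstr2 h w f) = h.
Proof. exact: size_mkseq. Qed.

Lemma width_mkstr2 h w f : 0 < h -> width2 (mkstr2 h w f) = w.
Proof. by case: h => // h _; rewrite /width2 /= size_mkseq. Qed.

Lemma eq_mkstr2 h w f g :
  (forall r c, r < h -> c < w -> f r c = g r c) -> mkstr2 h w f = mkstr2 h w g.
Proof.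
move=> fg; apply/eq_in_map => r; rewrite mem_iota => /andP[_ hr].
by apply/eq_in_map => c; rewrite mem_iota => /andP[_ hc]; apply: fg.
Qed.

Lemma vcat_mkstr2 h1 h2 w f g :
  vcat2 (mkstr2 h1 w f) (mkstr2 h2 w g) =
  mkstr2 (h1 + h2) w (fun r c => if r < h1 then f r c else g (r - h1) c).
Proof.
rewrite /vcat2 /mkstr2 mkseqD; congr (_ ++ _).
  by apply/eq_in_map => r; rewrite mem_iota => /andP[_ ->].
by apply: eq_mkseq => r /=; rewrite ltnNge leq_addr addKn.
Qed.

Lemma hcat_mkstr2 h w1 w2 f g :
  hcat2 (mkstr2 h w1 f) (mkstr2 h w2 g) =
  mkstr2 h (w1 + w2) (fun r c => if c < w1 then f r c else g r (c - w1)).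
Proof.
rewrite /hcat2 /mkstr2 /(mkseq _ h) zip_map -map_comp.
apply/eq_map => r /=; rewrite mkseqD; congr (_ ++ _).
  by apply/eq_in_map => c; rewrite mem_iota => /andP[_ ->].
by apply: eq_mkseq => c /=; rewrite ltnNge leq_addr addKn.
Qed.

End Rectangles.

Section Builder.
Variable S : Type.
Notation prog := (seq (rhs S)).

Lemma derives_ltn_size (P : prog) i X : derives P i X -> i < size P.
Proof. by case=> [j a|j x y A B|j x y A B] E; rewrite -onthTE E. Qed.

Lemma derives_cat (P Q : prog) i X : derives P i X -> derives (P ++ Q) i X.
Proof.
have onthPQ j r : onth P j = Some r -> onth (P ++ Q) j = Some r.
  by move=> E; rewrite onth_cat -onthTE E.
elim=> [j a E|j x y A B E hx hy _ IHx _ IHy hs|j x y A B E hx hy _ IHx _ IHy hs].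
- exact/der_char/onthPQ.
- exact: der_hor (onthPQ _ _ E) hx hy IHx IHy hs.
- exact: der_ver (onthPQ _ _ E) hx hy IHx IHy hs.
Qed.

(* SLPs are built by a state monad that only ever appends productions, so
   nonterminals built earlier keep their meaning. *)
Definition builder (A : Type) := prog -> prog * A.
Definition bret (A : Type) (a : A) : builder A := fun P => (P, a).
Definition bbind (A B : Type) (m : builder A) (k : A -> builder B) : builder B :=
  fun P => k (m P).2 (m P).1.

Definition extends (P P' : prog) := exists Q, P' = P ++ Q.

Lemma extends_refl P : extends P P.
Proof. by exists [::]; rewrite cats0. Qed.

Lemma extends_trans P1 P2 P3 : extends P1 P2 -> extends P2 P3 -> extends P1 P3.
Proof. by move=> [Q1 ->] [Q2 ->]; exists (Q1 ++ Q2); rewrite catA. Qed.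

Definition wp (A : Type) (m : builder A) (c : nat) (Q : A -> prog -> Prop) (P : prog) :=
  [/\ extends P (m P).1, size (m P).1 <= size P + c & Q (m P).2 (m P).1].

Lemma wp_ret (A : Type) (a : A) c Q P : Q a P -> wp (bret a) c Q P.
Proof. by split; [apply: extends_refl|apply: leq_addr|]. Qed.

Lemma wp_bind (A B : Type) (m : builder A) (k : A -> builder B) c1 c2 Q1 Q2 P :
  wp m c1 Q1 P ->
  (forall a P1, extends P P1 -> Q1 a P1 -> wp (k a) c2 Q2 P1) ->
  wp (bbind m k) (c1 + c2) Q2 P.
Proof.
move=> [ext1 size1 post1] wpk; have [ext2 size2 post2] := wpk _ _ ext1 post1.
split=> //; first exact: extends_trans ext2.
by apply: leq_trans size2 _; rewrite addnA leq_add2r.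
Qed.

Lemma wp_weaken (A : Type) (m : builder A) c c' (Q Q' : A -> prog -> Prop) P :
  c <= c' -> (forall a P', Q a P' -> Q' a P') -> wp m c Q P -> wp m c' Q' P.
Proof.
move=> le_c QQ' [ext sz post]; split; [done | | exact: QQ'].
by apply: leq_trans sz _; rewrite leq_add2l.
Qed.

(* An optional nonterminal realizes the h x w string with entries f; the empty
   string (h = 0 or w = 0), which no SLP derives, is realized by None. *)
Definition realizes (P : prog) (o : option nat) h w (f : nat -> nat -> S) :=
  if o is Some i then [/\ 0 < h, 0 < w & derives P i (mkstr2 h w f)]
  else h = 0 \/ w = 0.

Lemma realizes_extends P P' o h w f :
  extends P P' -> realizes P o h w f -> realizes P' o h w f.
Proof. by move=> [Q ->]; case: o => //= i [h0 w0 der]; split=> //; apply: derives_cat. Qed.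

Lemma realizes_eq P o h w f g :
  realizes P o h w f -> (forall r c, r < h -> c < w -> f r c = g r c) ->
  realizes P o h w g.
Proof. by case: o => //= i [h0 w0] + fg; rewrite (eq_mkstr2 fg). Qed.

Definition bchar (a : S) : builder (option nat) :=
  fun P => (P ++ [:: RChar a], Some (size P)).

Lemma wp_bchar a P : wp (bchar a) 1 (fun o P' => realizes P' o 1 1 (fun _ _ => a)) P.
Proof.
split; [by exists [:: RChar a] | by rewrite size_cat addn1 |].
by split=> //; apply/der_char/onth_last.
Qed.

Definition bcat (node : nat -> nat -> rhs S) (o1 o2 : option nat) : builder (option nat) :=
  match o1, o2 with
  | Some x, Some y => fun P => (P ++ [:: node x y], Some (size P))
  | Some _, None => bret o1
  | None, _ => bret o2
  end.

Notation bhcat := (bcat (@RHor S)).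
Notation bvcat := (bcat (@RVer S)).

Lemma wp_bhcat P o1 o2 h w1 w2 f g :
  realizes P o1 h w1 f -> realizes P o2 h w2 g ->
  wp (bhcat o1 o2) 1 (fun o P' => realizes P' o h (w1 + w2)
       (fun r c => if c < w1 then f r c else g r (c - w1))) P.
Proof.
case: o1 => [x|]; [case: o2 => [y|] |].
- move=> [h0 w10 derx] [_ w20 dery].
  split; [by exists [:: RHor S x y] | by rewrite size_cat addn1 |].
  split; [done | by rewrite addn_gt0 w10 |].
  rewrite -hcat_mkstr2; apply: der_hor (onth_last _ _) _ _ _ _ _.
  + exact: derives_ltn_size derx.
  + exact: derives_ltn_size dery.
  + exact: derives_cat.
  + exact: derives_cat.
  + by rewrite !size_mkstr2.
- move=> real1 [h_eq|w20]; first by case: real1; rewrite h_eq.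
  apply: wp_ret; rewrite w20 addn0.
  by apply: (realizes_eq real1) => r c _ ->.
- move=> [h_eq|w10] real2; apply: wp_ret.
    by case: o2 real2 => [y [h0]|_]; [rewrite h_eq in h0 | left].
  by rewrite w10; apply: (realizes_eq real2) => r c _ _; rewrite subn0.
Qed.

Lemma wp_bvcat P o1 o2 h1 h2 w f g :
  realizes P o1 h1 w f -> realizes P o2 h2 w g ->
  wp (bvcat o1 o2) 1 (fun o P' => realizes P' o (h1 + h2) w
       (fun r c => if r < h1 then f r c else g (r - h1) c)) P.
Proof.
case: o1 => [x|]; [case: o2 => [y|] |].
- move=> [h10 w0 derx] [h20 _ dery].
  split; [by exists [:: RVer S x y] | by rewrite size_cat addn1 |].
  split; [by rewrite addn_gt0 h10 | done |].
  rewrite -vcat_mkstr2; apply: der_ver (onth_last _ _) _ _ _ _ _.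
  + exact: derives_ltn_size derx.
  + exact: derives_ltn_size dery.
  + exact: derives_cat.
  + exact: derives_cat.
  + by rewrite !width_mkstr2.
- move=> real1 [h20|w_eq]; last by case: real1; rewrite w_eq.
  apply: wp_ret; rewrite h20 addn0.
  by apply: (realizes_eq real1) => r c ->.
- move=> [h10|w_eq] real2; apply: wp_ret.
    by rewrite h10; apply: (realizes_eq real2) => r c _ _; rewrite subn0.
  by case: o2 real2 => [y [_ w0]|_]; [rewrite w_eq in w0 | right].
Qed.

Fixpoint brepeat (cat : option nat -> option nat -> builder (option nat))
    (d : nat) (o : option nat) (k : nat) : builder (option nat) :=
  if d is d'.+1 then
    bbind (brepeat cat d' o k./2) (fun o1 =>
    bbind (cat o1 o1) (fun o2 => if odd k then cat o2 o else bret o2))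
  else bret None.

Section Repeat.
Variable cat : option nat -> option nat -> builder (option nat).
Variable R : nat -> option nat -> prog -> Prop.
Hypothesis R_extends : forall l o P P', extends P P' -> R l o P -> R l o P'.
Hypothesis R_cat : forall a b o1 o2 P, R a o1 P -> R b o2 P -> wp (cat o1 o2) 1 (R (a + b)) P.
Hypothesis R0 : forall P, R 0 None P.

Lemma wp_brepeat d o k P : R 1 o P -> k < 2 ^ d -> wp (brepeat cat d o k) (2 * d) (R k) P.
Proof.
elim: d k P => [|d IH] k P Ro; first by rewrite ltnS leqn0 => /eqP ->; apply: wp_ret.
rewrite expnS mul2n -ltn_half_double => half_lt.
have := odd_double_half k; rewrite -addnn => k_eq.
rewrite mulnS addnC.
apply: wp_bind (IH _ _ Ro half_lt) _ => o1 P1 ext1 R1.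
apply: wp_bind (R_cat R1 R1) _ => o2 P2 ext2 R2.
case: (odd k) k_eq => <- /=; last by apply: wp_ret.
by rewrite addnC; apply: R_cat R2 (R_extends (extends_trans ext1 ext2) Ro).
Qed.

End Repeat.

Lemma wp_brepeat_v d o k h w f P :
  realizes P o h w f -> k < 2 ^ d ->
  wp (brepeat bvcat d o k) (2 * d)
    (fun o' P' => realizes P' o' (k * h) w (fun r c => f (r %% h) c)) P.
Proof.
move=> Ro; apply: (wp_brepeat (R := fun l o P => realizes P o (l * h) w (fun r c => f (r %% h) c))).
- by move=> l o' P1 P2; apply: realizes_extends.
- move=> a b o1 o2 P1 R1 R2; apply: wp_weaken (wp_bvcat R1 R2) => // o' P2 Ro'.
  rewrite mulnDl; apply: (realizes_eq Ro') => r c _ _.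
  by case: ltnP => // le_ah_r; rewrite modnBMl.
- by left.
- by rewrite mul1n; apply: (realizes_eq Ro) => r c r_lt _; rewrite modn_small.
Qed.

Lemma wp_brepeat_h d o k h w f P :
  realizes P o h w f -> k < 2 ^ d ->
  wp (brepeat bhcat d o k) (2 * d)
    (fun o' P' => realizes P' o' h (k * w) (fun r c => f r (c %% w))) P.
Proof.
move=> Ro; apply: (wp_brepeat (R := fun l o P => realizes P o h (l * w) (fun r c => f r (c %% w)))).
- by move=> l o' P1 P2; apply: realizes_extends.
- move=> a b o1 o2 P1 R1 R2; apply: wp_weaken (wp_bhcat R1 R2) => // o' P2 Ro'.
  rewrite mulnDl; apply: (realizes_eq Ro') => r c _ _.
  by case: ltnP => // le_aw_c; rewrite modnBMl.
- by right.
- by rewrite mul1n; apply: (realizes_eq Ro) => r c _ c_lt; rewrite modn_small.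
Qed.

Definition bconst (dh dw : nat) (a : S) (h w : nat) : builder (option nat) :=
  bbind (bchar a) (fun o => bbind (brepeat bhcat dw o w) (fun row => brepeat bvcat dh row h)).

Lemma wp_bconst dh dw a h w P : h < 2 ^ dh -> w < 2 ^ dw ->
  wp (bconst dh dw a h w) (1 + (2 * dw + 2 * dh)) (fun o P' => realizes P' o h w (fun _ _ => a)) P.
Proof.
move=> h_lt w_lt; apply: wp_bind (wp_bchar a P) _ => o P1 _ Ro.
apply: wp_bind (wp_brepeat_h Ro w_lt) _ => row P2 _ Rrow.
apply: wp_weaken (wp_brepeat_v Rrow h_lt) => // o' P' Ro'.
by rewrite -[w]muln1 -[h]muln1.
Qed.

Section Construction.
Variables zero one dollar : S.
Notation bin_entry := (bin_entry zero one dollar).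
Notation shiftbin_entry := (shiftbin_entry zero one dollar).

Lemma bin_entry_msb k i : i < 2 ^ k.+1 -> bin_entry k.+1 i 1 = if i < 2 ^ k then zero else one.
Proof.
move=> i_lt; rewrite /Defs.bin_entry /= subn1 /=.
have exp_gt0 : 0 < 2 ^ k by rewrite expn_gt0.
case: ltnP => [lt_i | le_i]; first by rewrite divn_small.
suff -> : i %/ 2 ^ k = 1 by [].
apply/eqP; rewrite eqn_leq leq_divRL // mul1n le_i andbT -ltnS ltn_divLR //.
by rewrite -expnS.
Qed.

Lemma bin_entry_low k i c : c <= k -> bin_entry k.+1 i c.+2 = bin_entry k (i %% 2 ^ k) c.+1.
Proof.
move=> le_ck; rewrite /Defs.bin_entry /= !eqSS subSS.
case: eqP => // /eqP ne_ck; rewrite odd_div_exp2_mod //.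
by rewrite ltn_subrL /=; move: le_ck ne_ck; clear; lia.
Qed.

(* The rows "b_i $" of Bin_{2^k} together with the constant columns 0, 1 and $
   of height 2 ^ k: doubling all four costs six productions. *)
Fixpoint bbin_aux (k : nat) : builder (option nat * option nat * option nat * option nat) :=
  if k is k'.+1 then
    bbind (bbin_aux k') (fun st => let: (e, z, o, d) := st in
    bbind (bhcat z e) (fun top => bbind (bhcat o e) (fun bot =>
    bbind (bvcat top bot) (fun e' => bbind (bvcat z z) (fun z' =>
    bbind (bvcat o o) (fun o' => bbind (bvcat d d) (fun d' =>
    bret (e', z', o', d'))))))))
  else
    bbind (bchar dollar) (fun d => bbind (bchar zero) (fun z =>
    bbind (bchar one) (fun o => bret (d, z, o, d)))).

Definition bin_aux_spec k (st : option nat * option nat * option nat * option nat) P :=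
  let: (e, z, o, d) := st in
  [/\ realizes P e (2 ^ k) k.+1 (fun i c => bin_entry k i c.+1),
      realizes P z (2 ^ k) 1 (fun _ _ => zero),
      realizes P o (2 ^ k) 1 (fun _ _ => one)
    & realizes P d (2 ^ k) 1 (fun _ _ => dollar)].

Lemma wp_bvcat_self P o h a :
  realizes P o h 1 (fun _ _ => a) ->
  wp (bvcat o o) 1 (fun o' P' => realizes P' o' (h + h) 1 (fun _ _ => a)) P.
Proof.
move=> Ro; apply: wp_weaken (wp_bvcat Ro Ro) => // o' P' Ro'.
by apply: (realizes_eq Ro') => r c _ _; case: ifP.
Qed.

Lemma wp_bbin_aux k P : wp (bbin_aux k) (3 + 6 * k) (bin_aux_spec k) P.
Proof.
elim: k P => [|k IH] P /=.
  apply: wp_bind (wp_bchar dollar P) _ => d P1 _ Rd.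
  apply: wp_bind (wp_bchar zero P1) _ => z P2 ext2 Rz.
  apply: wp_bind (wp_bchar one P2) _ => o P3 ext3 Ro.
  have Rd3 := realizes_extends (extends_trans ext2 ext3) Rd.
  apply: wp_ret; rewrite /bin_aux_spec expn0; split; last by [].
  - by apply: (realizes_eq Rd3) => r c; rewrite !ltnS !leqn0 => /eqP-> /eqP->.
  - exact: realizes_extends ext3 Rz.
  - exact: Ro.
rewrite mulnS addnCA addnC.
apply: wp_bind (IH P) _ => [[[[e z] o] d]] P1 _ [Re Rz Ro Rd].
apply: wp_bind (wp_bhcat Rz Re) _ => top P2 ext2 Rtop.
apply: wp_bind (wp_bhcat (realizes_extends ext2 Ro) (realizes_extends ext2 Re)) _ => bot P3 ext3 Rbot.
apply: wp_bind (wp_bvcat (realizes_extends ext3 Rtop) Rbot) _ => e' P4 ext4 Re'.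
have ext14 : extends P1 P4 by apply: extends_trans ext2 (extends_trans ext3 ext4).
apply: wp_bind (wp_bvcat_self (realizes_extends ext14 Rz)) _ => z' P5 ext5 Rz'.
have ext15 := extends_trans ext14 ext5.
apply: wp_bind (wp_bvcat_self (realizes_extends ext15 Ro)) _ => o' P6 ext6 Ro'.
have ext16 := extends_trans ext15 ext6.
apply: wp_bind (wp_bvcat_self (realizes_extends ext16 Rd)) _ => d' P7 ext7 Rd'.
have ext57 := extends_trans ext6 ext7.
apply: wp_ret; rewrite /bin_aux_spec expnS mul2n -addnn.
split=> //; [|exact: realizes_extends ext57 Rz' | exact: realizes_extends ext7 Ro'].
apply: (realizes_eq (realizes_extends (extends_trans ext5 ext57) Re')) => i [|c] i_lt c_lt.
  by rewrite bin_entry_msb // expnS mul2n -addnn.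
rewrite bin_entry_low // subn1 /=; case: ltnP => [lt_i|le_i]; first by rewrite modn_small.
by rewrite -[in RHS](subnK le_i) modnDr modn_small // -(ltn_add2r (2 ^ k)) subnK.
Qed.

Definition bbin (n : nat) : builder (option nat) :=
  bbind (bbin_aux n) (fun st => let: (e, _, _, d) := st in bhcat d e).

Lemma wp_bbin n P :
  wp (bbin n) (3 + 6 * n + 1) (fun b P' => realizes P' b (2 ^ n) (n + 2) (bin_entry n)) P.
Proof.
apply: wp_bind (wp_bbin_aux n P) _ => [[[[e z] o] d]] P1 _ [Re _ _ Rd].
apply: wp_weaken (wp_bhcat Rd Re) => // b P' Rb.
by rewrite addn2; apply: (realizes_eq Rb) => i [|c] //= _ _; rewrite subn1.
Qed.

Lemma shiftbin_entry_shift n t r c :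
  shiftbin_entry n (r + t) (c + t * (n + 2)) = shiftbin_entry n r c.
Proof.
rewrite /Defs.shiftbin_entry divnDMl ?addn2 // [in X in bin_entry _ _ X]addnC modnMDl.
by rewrite addnAC leq_add2r ltn_add2r subnDr.
Qed.

Lemma shiftbin_entry_below n t r c :
  c < t * (n + 2) -> t + 2 ^ n <= r -> shiftbin_entry n r c = zero.
Proof.
rewrite /Defs.shiftbin_entry -ltn_divLR ?addn2 // => lt_jt le_r.
have le_jr : c %/ n.+2 + 2 ^ n <= r by apply: leq_trans le_r; rewrite leq_add2r ltnW.
by rewrite [r < _]ltnNge le_jr andbF.
Qed.

Lemma shiftbin_entry_above n t r c :
  t * (n + 2) <= c -> r < t -> shiftbin_entry n r c = zero.
Proof.
rewrite /Defs.shiftbin_entry -leq_divRL ?addn2 // => le_tj lt_rt.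
by rewrite leqNgt (leq_trans lt_rt le_tj).
Qed.

(* The first component is ShiftBin restricted to its first 2 ^ k copies,
   the second a zero block of matching width; both double at each step. *)
Fixpoint bstair (b zr : option nat) (k : nat) : builder (option nat * option nat) :=
  if k is k'.+1 then
    bbind (bstair b zr k') (fun st => let: (a, z) := st in
    bbind (bvcat a z) (fun az => bbind (bvcat z a) (fun za =>
    bbind (bhcat az za) (fun a' => bbind (bhcat z z) (fun zz =>
    bbind (bvcat zz zz) (fun z' => bret (a', z')))))))
  else bbind (bvcat b zr) (fun a => bret (a, zr)).

Lemma wp_bstair n b zr k P :
  realizes P b (2 ^ n) (n + 2) (bin_entry n) -> realizes P zr 1 (n + 2) (fun _ _ => zero) ->
  wp (bstair b zr k) (1 + 5 * k)
    (fun st P' => realizes P' st.1 (2 ^ k + 2 ^ n) (2 ^ k * (n + 2)) (shiftbin_entry n)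
                  /\ realizes P' st.2 (2 ^ k) (2 ^ k * (n + 2)) (fun _ _ => zero)) P.
Proof.
move=> Rb Rzr; elim: k P Rb Rzr => [|k IH] P Rb Rzr /=.
  rewrite muln0; apply: wp_bind (wp_bvcat Rb Rzr) _ => a P1 ext1 Ra.
  apply: wp_ret; rewrite /= expn0 mul1n addnC; split; last exact: realizes_extends ext1 Rzr.
  apply: (realizes_eq Ra) => r c _ lt_c.
  by rewrite /Defs.shiftbin_entry divn_small // modn_small //= subn0; case: ifP.
rewrite mulnS addnCA addnC.
apply: wp_bind (IH P Rb Rzr) _ => [[a z]] P1 _ /= [Ra Rz].
set t := 2 ^ k in Ra Rz *; set w := n + 2 in Ra Rz Rb Rzr *.
have t2 : 2 ^ k.+1 = t + t by rewrite expnS mul2n addnn.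
apply: wp_bind (wp_bvcat Ra Rz) _ => az P2 ext2 Raz.
apply: wp_bind (wp_bvcat (realizes_extends ext2 Rz) (realizes_extends ext2 Ra)) _ => za P3 ext3.
rewrite [t + (t + _)]addnC => Rza.
apply: wp_bind (wp_bhcat (realizes_extends ext3 Raz) Rza) _ => a' P4 ext4 Ra'.
have ext14 := extends_trans ext2 (extends_trans ext3 ext4).
apply: wp_bind (wp_bhcat (realizes_extends ext14 Rz) (realizes_extends ext14 Rz)) _ => zz P5 ext5 Rzz.
apply: wp_bind (wp_bvcat Rzz Rzz) _ => z' P6 ext6 Rz'.
apply: wp_ret; rewrite /= t2 mulnDl; split.
  rewrite addnAC; apply: (realizes_eq (realizes_extends (extends_trans ext5 ext6) Ra')).
  move=> r c _ _.
  case: ltnP => [lt_ctw | le_tw_c]; case: ltnP => // le_r.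
  - by rewrite (shiftbin_entry_below lt_ctw).
  - by rewrite (shiftbin_entry_above le_tw_c).
  - by rewrite -{2}(subnK le_r) -{2}(subnK le_tw_c) shiftbin_entry_shift.
by apply: (realizes_eq Rz') => r c _ _; case: ifP; case: ifP.
Qed.

Definition bcolumn (dh dw : nat) (B : option nat) (p q top h w : nat) : builder (option nat) :=
  bbind (bconst dh dw zero top w) (fun Ztop =>
  bbind (brepeat bvcat dh B q) (fun Rep =>
  bbind (bconst dh dw zero (h - top - q * p) w) (fun Zbot =>
  bbind (bvcat Rep Zbot) (fun X => bvcat Ztop X)))).

Lemma wp_bcolumn dh dw B p q top h w f P :
  0 < p -> realizes P B p w f -> top + q * p <= h -> h < 2 ^ dh -> w < 2 ^ dw ->
  wp (bcolumn dh dw B p q top h w) (4 + 4 * dw + 6 * dh)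
    (fun o P' => realizes P' o h w (fun r c =>
       if (top <= r) && (r - top < q * p) then f ((r - top) %% p) c else zero)) P.
Proof.
move=> p_gt0 RB le_h h_lt w_lt.
have lt_dh x : x <= h -> x < 2 ^ dh by move=> le_xh; apply: leq_ltn_trans h_lt.
have top_lt : top < 2 ^ dh by apply/lt_dh/(leq_trans (leq_addr _ _) le_h).
have q_lt : q < 2 ^ dh.
  by apply: lt_dh; apply: leq_trans le_h; apply: leq_trans (leq_addl _ _); rewrite leq_pmulr.
have bot_lt : h - top - q * p < 2 ^ dh by apply: lt_dh; rewrite -subnDA leq_subr.
apply: wp_weaken; last first.
- apply: wp_bind (wp_bconst zero P top_lt w_lt) _ => Ztop P1 ext1 RZtop.
  apply: wp_bind (wp_brepeat_v (realizes_extends ext1 RB) q_lt) _ => Rep P2 ext2 RRep.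
  apply: wp_bind (wp_bconst zero P2 bot_lt w_lt) _ => Zbot P3 ext3 RZbot.
  apply: wp_bind (wp_bvcat (realizes_extends ext3 RRep) RZbot) _ => X P4 ext4 RX.
  have RZtop4 := realizes_extends (extends_trans ext2 (extends_trans ext3 ext4)) RZtop.
  exact: wp_bvcat RZtop4 RX.
- move=> o P' Ro; rewrite -subnDA addnA subnKC // in Ro.
  by apply: (realizes_eq Ro) => r c _ _; case: leqP => //= _; case: ifP.
- by move: (dw) (dh) => a b; clear; lia.
Qed.

Definition bC (N M dN dM : nat) : builder (option nat) :=
  let n := logMp M in let m := 2 ^ n in let W := m * (n + 2) in
  bbind (bbin n) (fun b =>
  bbind (bconst dN dM zero 1 (n + 2)) (fun zr =>
  bbind (bstair b zr n) (fun st =>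
  bbind (bcolumn dN dM st.1 (2 * m) (N %/ (2 * m)) 0 N W) (fun L =>
  bbind (bcolumn dN dM st.1 (2 * m) ((N - m) %/ (2 * m)) m N W) (fun R =>
  bbind (bhcat L R) (fun LR =>
  bbind (bconst dN dM zero N (M - (W + W))) (fun Z =>
  bhcat LR Z))))))).

Lemma wp_bC N M dN dM P : let n := logMp M in
  0 < N -> 2 * 2 ^ n * (n + 2) <= M -> 2 ^ n <= N -> N < 2 ^ dN -> M < 2 ^ dM ->
  wp (bC N M dN dM) (17 + 11 * n + 12 * dM + 16 * dN)
     (fun o P' => realizes P' o N M (C_entry zero one dollar N M)) P.
Proof.
move=> n N_gt0 le_M le_mN N_lt M_lt.
set m := 2 ^ n in le_M le_mN *; set W := m * (n + 2).
have m2_gt0 : 0 < 2 * m by rewrite muln_gt0 expn_gt0.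
have le_WM : W + W <= M by move: le_M; rewrite /W; lia.
have W_lt : W < 2 ^ dM by apply: leq_ltn_trans M_lt; apply: leq_trans (leq_addr W W) le_WM.
have le_left : 0 + N %/ (2 * m) * (2 * m) <= N by rewrite leq_divM.
have le_right : m + (N - m) %/ (2 * m) * (2 * m) <= N.
  by rewrite -leq_subRL // leq_divM.
have one_lt : 1 < 2 ^ dN by apply: leq_ltn_trans N_lt.
have n2_lt : n + 2 < 2 ^ dM.
  by apply: leq_ltn_trans W_lt; rewrite /W leq_pmull // expn_gt0.
have Z_lt : M - (W + W) < 2 ^ dM by apply: leq_ltn_trans (leq_subr _ _) M_lt.
apply: wp_weaken; last first.
- apply: wp_bind (wp_bbin n P) _ => b P1 _ Rb.
  apply: wp_bind (wp_bconst zero P1 one_lt n2_lt) _ => zr P2 ext2 Rzr.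
  apply: wp_bind (wp_bstair n (realizes_extends ext2 Rb) Rzr) _ => st P3 _ [RB _].
  rewrite -/m -/W addnn -mul2n in RB.
  apply: wp_bind (wp_bcolumn m2_gt0 RB le_left N_lt W_lt) _ => L P4 ext4 RL.
  apply: wp_bind (wp_bcolumn m2_gt0 (realizes_extends ext4 RB) le_right N_lt W_lt) _ => R P5 ext5 RR.
  apply: wp_bind (wp_bhcat (realizes_extends ext5 RL) RR) _ => LR P6 ext6 RLR.
  apply: wp_bind (wp_bconst zero P6 N_lt Z_lt) _ => Z P7 ext7 RZ.
  exact: wp_bhcat (realizes_extends ext7 RLR) RZ.
- move=> o P' Ro; rewrite subnKC // in Ro; apply: (realizes_eq Ro) => r c _ _.
  rewrite /C_entry -/n -/m -/W !mul2n -!addnn subn0 /=.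
  case: (ltnP c (W + W)) => // le_WWc.
  by rewrite ltnNge (leq_trans (leq_addr W W) le_WWc).
- by move: (n) (dM) (dN) => a b c; clear; lia.
Qed.

End Construction.
End Builder.

Lemma slp_size_le (S : Type) (P : seq (rhs S)) : slp_size P <= 2 * size P.
Proof.
rewrite /slp_size; elim: P => [|r P IH]; first by rewrite big_nil.
by rewrite big_cons mulnS leq_add //; case: r.
Qed.

Lemma logMp_le M : 4 <= M -> 2 * 2 ^ logMp M * (logMp M + 2) <= M.
Proof.
move=> M_ge4; apply: (big_ind (fun k => 2 * 2 ^ k * (k + 2) <= M)) => //.
by move=> k l le_k le_l; rewrite /maxn; case: ifP.
Qed.

Lemma C_str_has_small_slp (S : Type) (zero one dollar : S) N M : C_defined N M ->
  exists (P : seq (rhs S)) (s : nat),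
    slp_derives P s (C_str zero one dollar N M) /\
    slp_size P <= 100 * (trunc_log 2 N + trunc_log 2 M).
Proof.
move=> [N_gt0 [M_ge4 le_MpN]]; have le_M := logMp_le M_ge4.
have [_ size_le] := wp_bC zero one dollar [::] N_gt0 le_M le_MpN
  (trunc_log_ltn N (isT : 1 < 2)) (trunc_log_ltn M (isT : 1 < 2)).
case: (bC _ _ _ _ _ _ _ _) => P [s|] /= in size_le *; last first.
  by case=> [N_eq|M_eq]; [move: N_gt0 | move: M_ge4]; rewrite ?N_eq ?M_eq.
case=> _ _ der; exists P, s; split; first exact: der.
have le_n : logMp M <= trunc_log 2 M.
  apply: trunc_log_max => //; apply: leq_trans le_M.
  by rewrite -mulnA mulnCA leq_pmulr // muln_gt0 addn_gt0 orbT.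
have le_2 : 2 <= trunc_log 2 M by apply: trunc_log_max.
apply: leq_trans (slp_size_le P) _; move: size_le le_n le_2.
by move: (logMp M) (trunc_log 2 N) (trunc_log 2 M) => n a b; clear; lia.
Qed.

Lemma INR_expn2 k : INR (2 ^ k) = Rpow_def.pow 2 k.
Proof. by elim: k => // k IH; rewrite expnS mult_INR IH. Qed.

Lemma INR_le_log2R x k : 2 ^ k <= x -> Rle (INR k) (log2R (INR x)).
Proof.
move=> le_x; have ln2_gt0 : Rlt 0 (ln 2) by rewrite -ln_1; apply: ln_increasing; lra.
have pow_gt0 : Rlt 0 (INR (2 ^ k)) by rewrite INR_expn2; apply: pow_lt; lra.
have ln_le : Rle (ln (INR (2 ^ k))) (ln (INR x)).
  case: (Rle_lt_or_eq_dec _ _ (le_INR _ _ (elimT leP le_x))) => [lt_x | ->].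
    exact/Rlt_le/ln_increasing.
  exact: Rle_refl.
rewrite INR_expn2 ln_pow in ln_le; last by lra.
rewrite /log2R; apply: (Rmult_le_reg_r (ln 2)) => //.
by rewrite /Rdiv Rmult_assoc Rinv_l ?Rmult_1_r //; lra.
Qed.

Theorem mainTheorem8 :
  exists c : R, Rlt (IZR 0%Z) c /\
    forall (S : Type) (zero one dollar : S) (N M : nat),
      C_defined N M ->
      exists (P : seq (rhs S)) (s : nat),
        slp_derives P s (C_str zero one dollar N M) /\
        Rle (INR (slp_size P)) (Rmult c (Rplus (log2R (INR N)) (log2R (INR M)))).
Proof.
exists (INR 100); split; first by rewrite INR_IZR_INZ /=; lra.
move=> S zero one dollar N M CNM; have [N_gt0 [M_ge4 _]] := CNM.
have [P [s [der size_le]]] := C_str_has_small_slp zero one dollar CNM.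
exists P, s; split=> //; apply: Rle_trans (le_INR _ _ (elimT leP size_le)) _.
rewrite mult_INR plus_INR; apply: Rmult_le_compat_l; first exact: pos_INR.
apply: Rplus_le_compat; apply: INR_le_log2R; apply: trunc_logP => //.
exact: leq_trans M_ge4.
Qed.
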